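(* Let $G$ be a connected graph with vertex set $\{v_1,\dots,v_n\}$ and let $G^+$ be obtained from $G$ by adding new vertices $v_1^+,\dots,v_n^+$ and edges $v_iv_i^+$ ($i=1,\dots,n$). Let $Q$ be a clique separator of $G^+$ and let $M$ be the $Q$-attachedness graph of $G^+$. Then $M$ has no full antipodal triangle and no induced copy of $W^{(0)}_{2k+1}$ for any $k\ge 1$ if and only if $M$ has no induced copy of $W^{(0)}_{2k+1}$ for any $k\ge 1$.
   Context: Graphs are finite and simple. A clique is an inclusion-maximal set of pairwise adjacent vertices. For a connected graph $X$, a clique $Q$ of $X$ is a clique separator if $X-Q$ has at least two connected components; if their vertex sets are $V_1,\dots,V_s$, put $\gamma_i=X[V_i\cup Q]$ and $\Gamma_Q=\{\gamma_1,\dots,\gamma_s\}$. A relevant clique of $\gamma\in\Gamma_Q$ is a clique $K$ of the graph $\gamma$ with $K\cap Q\neq\emptyset$ and $K\neq Q$. An element $\gamma$ is a neighboring subgraph of a vertex $v$ if $v$ belongs to some relevant clique of $\gamma$; a set $W\subseteq\Gamma_Q$ is neighboring if there is $v\in Q$ such that every member of $W$ is a neighboring subgraph of $v$. Relations on $\Gamma_Q$: attachedness $\gamma\bowtie\gamma'$ iff there are relevant cliques $K$ of $\gamma$ and $K'$ of $\gamma'$ with $K\cap K'\cap Q\neq\emptyset$; dominance $\gamma\le\gamma'$ iff $\gamma\bowtie\gamma'$ and, for each relevant clique $K'$ of $\gamma'$, either $K\cap Q\subseteq K'\cap Q$ for every relevant clique $K$ of $\gamma$, or $K\cap K'\cap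 Q=\emptyset$ for every relevant clique $K$ of $\gamma$; antipodality $\gamma\leftrightarrow\gamma'$ iff there are relevant cliques $K$ of $\gamma$ and $K'$ of $\gamma'$ with $K\cap K'\cap Q\neq\emptyset$ and $K\cap Q$, $K'\cap Q$ inclusion-wise incomparable. Dominance is a preorder; by standing convention, elements $\gamma,\gamma'$ with $\gamma\le\gamma'$ and $\gamma'\le\gamma$ are identified (attachedness, antipodality and being neighboring are compatible with this identification). The $Q$-attachedness graph $M$ has vertex set $\Gamma_Q$ and an edge $\gamma\gamma'$ for each pair of distinct attached elements; it is 2-edge-colored: the edge is antipodal if $\gamma\leftrightarrow\gamma'$ and a dominance edge otherwise (then $\gamma\le\gamma'$ or $\gamma'\le\gamma$). A triangle of $M$ is full if its vertex set is a neighboring set; a full antipodal triangle is a full triangle all of whose edges are antipodal. $W^{(0)}_{2k+1}$ ($k\ge1$) is the 2-edge-colored wheel with hub $c$ and rim vertices $x_1,\dots,x_{2k+1}$, rim edges $x_ix_{i+1}$ (indices mod $2k+1$) antipodal and all spokes $cx_i$ dominance edges. An induced copy of a 2-edge-colored graph $F$ in $M$ is an injective map from $V(F)$ to $V(M)$ such that two vertices are adjacent in $F$ iff their images are adjacent in $M$, with the same edge color. *)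

From mathcomp Require Import all_boot.
Set Implicit Arguments. Unset Strict Implicit. Unset Printing Implicit Defensive.

(* A finite simple graph is a symmetric irreflexive relation [adj] on a finType V. *)

Definition complete (V : finType) (adj : rel V) (K : {set V}) : bool :=
  [forall x in K, forall y in K, (x != y) ==> adj x y].

Definition is_clique_in (V : finType) (adj : rel V) (S K : {set V}) : bool :=
  maxset (fun K' : {set V} => (K' \subset S) && complete adj K') K.

Definition is_clique (V : finType) (adj : rel V) (K : {set V}) : bool :=
  is_clique_in adj [set: V] K.

Definition adj_minus (V : finType) (adj : rel V) (Q : {set V}) : rel V :=
  fun x y => [&& adj x y, x \notin Q & y \notin Q].

Definition components (V : finType) (adj : rel V) (Q : {set V}) : {set {set V}} :=
  [set [set y | connect (adj_minus adj Q) x y] | x in ~: Q].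

Definition clique_separator (V : finType) (adj : rel V) (Q : {set V}) : bool :=
  is_clique adj Q && (1 < #|components adj Q|).

(* Gamma_Q: each gamma_i = X[V_i ∪ Q] is represented by its vertex set V_i ∪ Q. *)
Definition GammaQ (V : finType) (adj : rel V) (Q : {set V}) : {set {set V}} :=
  [set C :|: Q | C in components adj Q].

Definition relevant (V : finType) (adj : rel V) (Q S K : {set V}) : bool :=
  [&& is_clique_in adj S K, K :&: Q != set0 & K != Q].

Definition neighboring_sub (V : finType) (adj : rel V) (Q g : {set V}) (v : V) : bool :=
  [exists K : {set V}, relevant adj Q g K && (v \in K)].

Definition attached (V : finType) (adj : rel V) (Q g g' : {set V}) : bool :=
  [exists K : {set V}, exists K' : {set V},
     [&& relevant adj Q g K, relevant adj Q g' K' & K :&: K' :&: Q != set0]].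

Definition dominated (V : finType) (adj : rel V) (Q g g' : {set V}) : bool :=
  attached adj Q g g' &&
  [forall K' : {set V}, relevant adj Q g' K' ==>
     ([forall K : {set V}, relevant adj Q g K ==> (K :&: Q \subset K' :&: Q)]
      || [forall K : {set V}, relevant adj Q g K ==> (K :&: K' :&: Q == set0)])].

Definition antipodal (V : finType) (adj : rel V) (Q g g' : {set V}) : bool :=
  [exists K : {set V}, exists K' : {set V},
     [&& relevant adj Q g K, relevant adj Q g' K', K :&: K' :&: Q != set0,
         ~~ (K :&: Q \subset K' :&: Q) & ~~ (K' :&: Q \subset K :&: Q)]].

Definition identified (V : finType) (adj : rel V) (Q g g' : {set V}) : bool :=
  (g == g') || (dominated adj Q g g' && dominated adj Q g' g).

Inductive ecol := Antipodal | Dominance.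

(* colour of the pair {[g],[g']} in the Q-attachedness graph M (None = no edge) *)
Definition mcol (V : finType) (adj : rel V) (Q g g' : {set V}) : option ecol :=
  if attached adj Q g g' && ~~ identified adj Q g g'
  then Some (if antipodal adj Q g g' then Antipodal else Dominance)
  else None.

(* induced copy of a 2-edge-coloured graph F (vertex type VF, colour map F) in M;
   vertices of M are elements of Gamma_Q up to identification *)
Definition induced_copy (VF : finType) (F : VF -> VF -> option ecol)
    (V : finType) (adj : rel V) (Q : {set V}) : Prop :=
  exists f : VF -> {set V},
    (forall x, f x \in GammaQ adj Q) /\
    (forall x y, x != y -> ~~ identified adj Q (f x) (f y)) /\
    (forall x y, x != y -> mcol adj Q (f x) (f y) = F x y).

(* the wheel W^{(0)}_{2k+1}: hub = None, rim vertices Some i, i : 'I_(2k+1) *)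
Definition wheel0 (k : nat) (x y : option 'I_(k.*2.+1)) : option ecol :=
  match x, y with
  | None, None => None
  | None, Some _ | Some _, None => Some Dominance
  | Some i, Some j =>
      if (i.+1 %% k.*2.+1 == j) || (j.+1 %% k.*2.+1 == i) then Some Antipodal else None
  end.

Definition has_full_antipodal_triangle (V : finType) (adj : rel V) (Q : {set V}) : Prop :=
  exists g1 g2 g3 : {set V},
    [/\ g1 \in GammaQ adj Q, g2 \in GammaQ adj Q & g3 \in GammaQ adj Q] /\
    [/\ mcol adj Q g1 g2 = Some Antipodal, mcol adj Q g2 g3 = Some Antipodal
      & mcol adj Q g1 g3 = Some Antipodal] /\
    exists2 v, v \in Q &
      [&& neighboring_sub adj Q g1 v, neighboring_sub adj Q g2 v & neighboring_sub adj Q g3 v].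

(* G^+ : vertex v_i = inl i, pendant vertex v_i^+ = inr i *)
Definition plus_adj (T : finType) (e : rel T) : rel (T + T) :=
  fun u w => match u, w with
  | inl x, inl y => e x y
  | inl x, inr y => x == y
  | inr x, inl y => x == y
  | inr _, inr _ => false
  end.

From mathcomp Require Import all_boot.
Set Implicit Arguments. Unset Strict Implicit. Unset Printing Implicit Defensive.

(* Let v be a common vertex of a full antipodal triangle g1 g2 g3 of M.
   Antipodality needs three distinct vertices of Q, so v is an original
   vertex v_a and its pendant v_a^+ lies outside Q.  Then {v_a^+} is a
   component of G^+ - Q, and the only clique of h = Q + v_a^+ meeting Q is
   {v_a, v_a^+}.  Its trace on Q is the single vertex v_a, so h is attached
   to each g_i by a dominance edge and never by an antipodal one: h is the
   hub of an induced W_3 with rim g1 g2 g3. *)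

Section Attachedness.
Variables (V : finType) (adj : rel V) (Q : {set V}).
Implicit Types (g h : {set V}) (K : {set V}).

Lemma attachedC g g' : attached adj Q g g' = attached adj Q g' g.
Proof.
suff sym k k' : attached adj Q k k' -> attached adj Q k' k
  by apply/idP/idP; apply: sym.
case/existsP=> K /existsP[K' /and3P[rK rK' meet]].
by apply/existsP; exists K'; apply/existsP; exists K; rewrite rK rK' (setIC K').
Qed.

Lemma antipodalC g g' : antipodal adj Q g g' = antipodal adj Q g' g.
Proof.
suff sym k k' : antipodal adj Q k k' -> antipodal adj Q k' k
  by apply/idP/idP; apply: sym.
case/existsP=> K /existsP[K' /and5P[rK rK' meet nsub nsub']].
apply/existsP; exists K'; apply/existsP; exists K.
by rewrite rK rK' (setIC K') meet nsub nsub'.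
Qed.

Lemma identifiedC g g' : identified adj Q g g' = identified adj Q g' g.
Proof. by rewrite /identified eq_sym andbC. Qed.

Lemma mcolC g g' : mcol adj Q g g' = mcol adj Q g' g.
Proof. by rewrite /mcol attachedC identifiedC antipodalC. Qed.

Lemma mcol_edge_not_identified g g' :
  mcol adj Q g g' <> None -> ~~ identified adj Q g g'.
Proof. by rewrite /mcol; case: andP => // -[]. Qed.

Lemma mcol_antipodal g g' :
  mcol adj Q g g' = Some Antipodal -> antipodal adj Q g g'.
Proof. by rewrite /mcol; case: (_ && _) => //; case: antipodal. Qed.

Lemma antipodal_card_gt2 g g' : antipodal adj Q g g' -> 2 < #|Q|.
Proof.
case/existsP=> K /existsP[K' /and5P[_ _ /set0Pn[z zKK'Q] nsub nsub']].
move: zKK'Q; rewrite !inE => /andP[/andP[zK zK'] zQ].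
case/subsetPn: nsub => w; rewrite !inE => /andP[wK wQ]; rewrite wQ andbT => wK'.
case/subsetPn: nsub' => u; rewrite !inE => /andP[uK' uQ]; rewrite uQ andbT => uK.
apply/card_gt2P; exists z, w, u; split=> //; split.
- by apply: contraNneq wK' => <-.
- by apply: contraNneq uK => <-.
- by apply: contraNneq uK => ->.
Qed.

Lemma not_antipodal_trace1 h x g :
  (forall K, relevant adj Q h K -> K :&: Q \subset [set x]) ->
  ~~ antipodal adj Q h g.
Proof.
move=> trace1; apply/existsP=> -[K /existsP[K' /and5P[rK _ /set0Pn[z zKK'Q] nsub _]]].
move: zKK'Q; rewrite !inE => /andP[/andP[zK zK'] zQ].
have in_x y : y \in K :&: Q -> y = x by move/(subsetP (trace1 _ rK)); rewrite inE => /eqP.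
have zx : z = x by apply: in_x; rewrite inE zK zQ.
by case/subsetPn: nsub => y /in_x->; rewrite -zx inE zK' zQ.
Qed.

(* The hypothesis that g is antipodal to some g' is what keeps h and g from
   being identified: h itself is antipodal to nothing. *)
Lemma mcol_trace1_dominance h x K0 g g' :
  relevant adj Q h K0 -> x \in K0 -> x \in Q ->
  (forall K, relevant adj Q h K -> K :&: Q \subset [set x]) ->
  neighboring_sub adj Q g x -> antipodal adj Q g g' ->
  mcol adj Q h g = Some Dominance.
Proof.
move=> rK0 xK0 xQ trace1 /existsP[K /andP[rK xK]] anti_g.
have xKK0 : x \in K :&: K0 :&: Q by rewrite !inE xK xK0 xQ.
have att : attached adj Q h g.
  apply/existsP; exists K0; apply/existsP; exists K; rewrite rK0 rK /=.
  by apply/set0Pn; exists x; rewrite !inE xK0 xK xQ.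
have not_dom : ~~ dominated adj Q g h.
  apply/andP=> -[_ /forallP/(_ K0)]; rewrite rK0 /=.
  case/orP=> [/forallP sub | /forallP/(_ K)].
    move: anti_g; apply/negP; apply: (not_antipodal_trace1 (x := x)) => K1 rK1.
    by apply: subset_trans (trace1 _ rK0); move: (sub K1); rewrite rK1.
  by rewrite rK /= => /eqP disj; rewrite disj inE in xKK0.
have neq : h != g by apply: contraNneq (not_antipodal_trace1 g' trace1) => ->.
by rewrite /mcol att /identified (negbTE neq) (negbTE not_dom) andbF
  (negbTE (not_antipodal_trace1 g trace1)).
Qed.

Lemma wheel3_induced_copy h g1 g2 g3 :
  [/\ h \in GammaQ adj Q, g1 \in GammaQ adj Q, g2 \in GammaQ adj Q
    & g3 \in GammaQ adj Q] ->
  [/\ mcol adj Q g1 g2 = Some Antipodal, mcol adj Q g2 g3 = Some Antipodal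
    & mcol adj Q g1 g3 = Some Antipodal] ->
  [/\ mcol adj Q h g1 = Some Dominance, mcol adj Q h g2 = Some Dominance
    & mcol adj Q h g3 = Some Dominance] ->
  induced_copy (wheel0 (k := 1)) adj Q.
Proof.
move=> [Gh G1 G2 G3] [M12 M23 M13] [Mh1 Mh2 Mh3].
pose f (x : option 'I_(1.*2.+1)) := if x is Some i then nth g3 [:: g1; g2] i else h.
have Mf x y : x != y -> mcol adj Q (f x) (f y) = wheel0 (k := 1) x y.
  by case: x y => [[[|[|[|?]]] ?]|] [[[|[|[|?]]] ?]|] //=; rewrite // mcolC.
exists f; split; first by case=> [[[|[|[|?]]] ?]|].
split=> x y neq; last exact: Mf.
apply: mcol_edge_not_identified; rewrite Mf //.
by case: x y neq => [[[|[|[|?]]] ?]|] [[[|[|[|?]]] ?]|].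
Qed.

End Attachedness.

Section PendantVertices.
Variables (T : finType) (e : rel T).
Local Notation A := (plus_adj e).
Implicit Types (Q K : {set T + T}) (a : T).

Lemma complete_pendant_sub K a :
  complete A K -> inr a \in K -> K \subset [set inl a; inr a].
Proof.
move=> cK aK; apply/subsetP => y yK; rewrite !inE.
have [-> | ya] := eqVneq y (inr a); first by rewrite orbT.
move/forall_inP: cK => /(_ _ aK)/forall_inP/(_ _ yK); rewrite eq_sym ya /=.
by case: y {yK ya} => // y /eqP->; rewrite eqxx.
Qed.

Lemma not_antipodal_pendant_in Q a g g' :
  complete A Q -> inr a \in Q -> ~~ antipodal A Q g g'.
Proof.
move=> cQ aQ; apply: contraTN isT => /antipodal_card_gt2.
by have := subset_leq_card (complete_pendant_sub cQ aQ); rewrite cards2 ltnNge => ->.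
Qed.

Section PendantComponent.
Variables (Q : {set T + T}) (a : T).
Hypotheses (cQ : complete A Q) (aQ : inl a \in Q) (a'Q : inr a \notin Q).

Lemma pendant_in_GammaQ : inr a |: Q \in GammaQ A Q.
Proof.
apply/imsetP; exists [set inr a] => //.
apply/imsetP; exists (inr a); first by rewrite inE.
apply/setP => y; rewrite !inE; apply/eqP/idP => [-> | /connectP[[|z p] /= zp ->] //].
  exact: connect0.
by case: z zp => // z /andP[/and3P[/eqP <-]]; rewrite aQ.
Qed.

Lemma pendant_edge_relevant : relevant A Q (inr a |: Q) [set inl a; inr a].
Proof.
apply/and3P; split; last first.
- by apply: contraNneq a'Q => <-; rewrite !inE eqxx orbT.
- by apply/set0Pn; exists (inl a); rewrite !inE eqxx aQ.
apply/maxsetP; split=> [|B /andP[_ cB] sEB].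
  apply/andP; split.
    by apply/subsetP => x; rewrite !inE => /orP[]/eqP->; rewrite ?eqxx ?aQ ?orbT.
  by apply/forall_inP => x; rewrite !inE => /orP[]/eqP->;
    apply/forall_inP => y; rewrite !inE => /orP[]/eqP->; rewrite /= ?eqxx.
apply/eqP; rewrite eqEsubset sEB andbT; apply: complete_pendant_sub cB _.
by apply: (subsetP sEB); rewrite !inE eqxx orbT.
Qed.

(* A clique of Q + v_a^+ avoiding v_a^+ lies in Q, hence equals Q by maximality. *)
Lemma pendant_relevant_trace K :
  relevant A Q (inr a |: Q) K -> K :&: Q \subset [set inl a].
Proof.
case/and3P=> /maxsetP[/andP[sKh cK] maxK] _ KQ.
have aK : inr a \in K.
  apply: contraNT KQ => a'K; apply/eqP/esym/maxK; first by rewrite /= subsetUr cQ.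
  apply/subsetP => x xK; move: (subsetP sKh x xK); rewrite !inE.
  by case/orP=> // /eqP xa; rewrite -xa xK in a'K.
apply/subsetP => x /setIP[xK xQ]; move: (subsetP (complete_pendant_sub cK aK) x xK).
by rewrite !inE => /orP[// | /eqP xa]; move: a'Q; rewrite -xa xQ.
Qed.

End PendantComponent.

End PendantVertices.

Theorem lemma4p3 (T : finType) (e : rel T) :
  symmetric e -> irreflexive e -> (forall x y : T, connect e x y) ->
  forall Q : {set T + T}, clique_separator (plus_adj e) Q ->
  ((~ has_full_antipodal_triangle (plus_adj e) Q /\
    forall k : nat, 0 < k -> ~ induced_copy (wheel0 (k := k)) (plus_adj e) Q)
   <-> (forall k : nat, 0 < k -> ~ induced_copy (wheel0 (k := k)) (plus_adj e) Q)).
Proof.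
move=> _ _ _ Q /andP[/maxsetP[/andP[_ cQ] _] _].
split=> [[] // | no_wheel]; split=> //.
case=> g1 [g2 [g3 [[G1 G2 G3] [[M12 M23 M13] [v vQ /and3P[N1 N2 N3]]]]]].
have anti12 := mcol_antipodal M12.
have anti21 : antipodal (plus_adj e) Q g2 g1 by rewrite antipodalC.
have anti31 : antipodal (plus_adj e) Q g3 g1 by rewrite antipodalC mcol_antipodal.
have pendant_out a : inr a \notin Q.
  by apply: contraTN anti12 => /(not_antipodal_pendant_in _ _ cQ).
case: v vQ N1 N2 N3 => [a|a] aQ N1 N2 N3; last by move: (pendant_out a); rewrite aQ.
have dom := mcol_trace1_dominance (pendant_edge_relevant e aQ (pendant_out a))
  (setU11 _ _) aQ (pendant_relevant_trace cQ (pendant_out a)).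
apply: (no_wheel 1 isT); apply: (@wheel3_induced_copy _ _ _ (inr a |: Q) g1 g2 g3).
- by split=> //; apply: pendant_in_GammaQ.
- by split.
- by split; [apply: dom N1 anti12 | apply: dom N2 anti21 | apply: dom N3 anti31].
Qed.
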